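(* Let $n\ge2$, $s\in(0,1)$, $r>0$ and $s_1\in(0,2s)$. Then for all $x,y\in\mathbb{B}_r$ with $x\neq y$, $$G_{\mathbb{B}_r}(x,y)\le C_4(n,s)\,(d(x))^{s}\,\frac{(d(y))^{s-s_1}}{|x-y|^{\,n-s_1}},$$ where $C_4(n,s)=\pi^{-n/2}\Gamma(s)^{-1}\max\left\{\dfrac{2^{2s}\Gamma(\frac n2)}{\Gamma(1+s)},\ \Gamma\!\left(\tfrac n2-s\right)\right\}$.
   Context: $\mathbb{B}_r=\{x\in\mathbb{R}^n:|x|<r\}$, $d(x)=r-|x|$. The Green function of the fractional Laplacian $(-\Delta)^s$ on $\mathbb{B}_r$ (for $n\ge2$) is $$G_{\mathbb{B}_r}(x,y)=\kappa(n,s)\,|x-y|^{2s-n}\int_0^{r^*(x,y)}\frac{t^{s-1}}{(t+1)^{n/2}}\,dt,\qquad r^*(x,y)=\frac{(r^2-|x|^2)(r^2-|y|^2)}{r^2|x-y|^2},$$ with $\kappa(n,s)=\dfrac{\Gamma(\frac n2)}{2^{2s}\pi^{n/2}\Gamma(s)^2}$. *)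

From Stdlib Require Import Reals List.
From Coquelicot Require Import Coquelicot.
Import ListNotations.
Open Scope R_scope.

(* Points of R^n are lists of reals of length n. *)
Definition vnorm (x : list R) : R := sqrt (fold_right (fun a acc => a * a + acc) 0 x).
Definition vsub (x y : list R) : list R := map (fun p => fst p - snd p) (combine x y).

Definition Gamma (a : R) : R :=
  RInt_gen (fun t => Rpower t (a - 1) * exp (- t)) (at_right 0) (Rbar_locally p_infty).

Definition kappa (n : nat) (s : R) : R :=
  Gamma (INR n / 2) / (Rpower 2 (2 * s) * Rpower PI (INR n / 2) * (Gamma s) ^ 2).

Definition rstar (r : R) (x y : list R) : R :=
  (r ^ 2 - vnorm x ^ 2) * (r ^ 2 - vnorm y ^ 2) / (r ^ 2 * vnorm (vsub x y) ^ 2).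

Definition green_ball (n : nat) (s r : R) (x y : list R) : R :=
  kappa n s * Rpower (vnorm (vsub x y)) (2 * s - INR n) *
  RInt_gen (fun t => Rpower t (s - 1) / Rpower (t + 1) (INR n / 2))
           (at_right 0) (at_point (rstar r x y)).

Definition C4 (n : nat) (s : R) : R :=
  / Rpower PI (INR n / 2) / Gamma s *
  Rmax (Rpower 2 (2 * s) * Gamma (INR n / 2) / Gamma (1 + s)) (Gamma (INR n / 2 - s)).

(* Write c = n/2, rho = |x - y| and I = int_0^{r*} t^(s-1) (t+1)^(-c) dt, so that
   G(x,y) = kappa rho^(2s-n) I.  The integral obeys two bounds: I <= r*^s / s, and
   Gamma(c) I <= Gamma(s) Gamma(c-s) (the Beta integral).  Since r* <= 4 d(x) d(y) / rho^2,
   the first bound and Gamma(1+s) <= s Gamma(s) give the estimate when d(y) <= 2 rho; when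
   d(y) > 2 rho the second one suffices, as then rho < d(y) and d(x) >= d(y) - rho > d(y)/2.
   The Beta bound is proved without Fubini: Gamma(c) (1+t)^(-c) is approximated by
   int_alpha^beta v^(c-1) e^(-v(1+t)) dv, and the two integrations are exchanged by
   differentiating in beta and applying the mean value theorem. *)

From Stdlib Require Import Reals List Lra Psatz Classical.
From Coquelicot Require Import Coquelicot.
Open Scope R_scope.

(** * Real powers and improper integrals *)

Lemma Rpower_pos x a : 0 < Rpower x a.
Proof. apply exp_pos. Qed.

Lemma Rpower_ge_1 x a : 1 <= x -> 0 <= a -> 1 <= Rpower x a.
Proof.
  intros Hx Ha. rewrite <- (Rpower_O x) by lra. apply Rle_Rpower; lra.
Qed.

Lemma Rinv_le_1 x : 1 <= x -> / x <= 1.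
Proof. intros Hx. rewrite <- Rinv_1 at 1. apply Rinv_le_contravar; lra. Qed.

Lemma Rinv_le_div a p q : 0 < a -> 0 < q -> q <= a * p -> / a <= p / q.
Proof.
  intros Ha Hq Hqp. replace (p / q) with (/ a + (a * p - q) / (a * q)) by (field; lra).
  enough (0 <= (a * p - q) / (a * q)) by lra.
  apply Rdiv_le_0_compat; [lra | apply Rmult_lt_0_compat; assumption].
Qed.

Lemma Rpower_minus z a b : Rpower z (a - b) = Rpower z a / Rpower z b.
Proof. unfold Rminus. rewrite Rpower_plus, Rpower_Ropp. reflexivity. Qed.

Lemma Rpower_Rinv z a : 0 < z -> Rpower (/ z) a = / Rpower z a.
Proof. intros Hz. unfold Rpower. rewrite ln_Rinv, <- exp_Ropp by exact Hz. f_equal. ring. Qed.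

Lemma Rpower_exp u a : Rpower (exp u) a = exp (a * u).
Proof. unfold Rpower. rewrite ln_exp. reflexivity. Qed.

Lemma Rpower_opp_mul_pred k p : 0 < k -> Rpower k (- p) * k * Rpower k (p - 1) = 1.
Proof.
  intros Hk. rewrite <- (Rpower_1 k) at 2 by exact Hk. rewrite <- !Rpower_plus.
  replace (- p + 1 + (p - 1)) with 0 by ring. apply Rpower_O, Hk.
Qed.

Lemma is_derive_Rpower x a : 0 < x -> is_derive (fun t => Rpower t a) x (a * Rpower x (a - 1)).
Proof. intros Hx. apply is_derive_Reals, derivable_pt_lim_power, Hx. Qed.

Lemma continuous_Rpower x a : 0 < x -> continuous (fun t => Rpower t a) x.
Proof.
  intros Hx. apply (@ex_derive_continuous R_AbsRing R_NormedModule).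
  eexists. apply is_derive_Rpower, Hx.
Qed.

Lemma continuity_pt_Rpower x a : 0 < x -> continuity_pt (fun t => Rpower t a) x.
Proof. intros Hx. apply continuity_pt_filterlim, continuous_Rpower, Hx. Qed.

Lemma is_RInt_Rpower a b p : 0 < a -> a <= b -> p <> 0 ->
  is_RInt (fun t => Rpower t (p - 1)) a b ((Rpower b p - Rpower a p) / p).
Proof.
  intros Ha Hab Hp.
  replace ((Rpower b p - Rpower a p) / p) with (minus (/ p * Rpower b p) (/ p * Rpower a p))
    by (unfold minus, plus, opp; simpl; field; exact Hp).
  apply (@is_RInt_derive R_CompleteNormedModule (fun t => / p * Rpower t p)); intros t Ht;
    rewrite Rmin_left, Rmax_right in Ht by lra.
  - replace (Rpower t (p - 1)) with (/ p * (p * Rpower t (p - 1))) by (field; exact Hp).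
    apply (is_derive_scal (fun t => Rpower t p)), is_derive_Rpower. lra.
  - apply continuous_Rpower. lra.
Qed.

Lemma is_lub_approx (E : R -> Prop) L eps : is_lub E L -> 0 < eps -> exists v, E v /\ L - eps < v.
Proof.
  intros [_ HL] Heps. apply NNPP. intros Hnone.
  assert (L <= L - eps) by (apply HL; intros v Hv; apply Rnot_lt_le; intros Hlt; eauto).
  lra.
Qed.

Section Nonnegative_integrand.

Variable g : R -> R.
Hypothesis g_cont : forall t, 0 < t -> continuous g t.
Hypothesis g_nonneg : forall t, 0 < t -> 0 <= g t.

Lemma ex_RInt_pos a b : 0 < a -> a <= b -> ex_RInt g a b.
Proof.
  intros Ha Hab. apply (@ex_RInt_continuous R_CompleteNormedModule).
  intros t Ht. rewrite Rmin_left in Ht by lra. apply g_cont. lra.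
Qed.

Lemma RInt_le_widen a a' b b' : 0 < a' -> a' <= a -> a <= b -> b <= b' ->
  RInt g a b <= RInt g a' b'.
Proof.
  intros Ha' Ha'a Hab Hbb'.
  assert (Hnn : forall u w, a' <= u -> u <= w -> 0 <= RInt g u w).
  { intros u w Hu Huw. apply RInt_ge_0; [exact Huw| apply ex_RInt_pos; lra|].
    intros t Ht. apply g_nonneg. lra. }
  rewrite <- (RInt_Chasles g a' a b'), <- (RInt_Chasles g a b b') by (apply ex_RInt_pos; lra).
  pose proof (Hnn a' a); pose proof (Hnn b b'). simpl. unfold plus; simpl. lra.
Qed.

Lemma is_RInt_gen_lub_pinfty L :
  is_lub (fun v => exists a b, 0 < a <= b /\ v = RInt g a b) L ->
  is_RInt_gen g (at_right 0) (Rbar_locally p_infty) L.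
Proof.
  intros HL P [eps HP]. pose proof (cond_pos eps) as Heps.
  destruct (is_lub_approx _ _ eps HL Heps) as [v [[a0 [b0 [Hab0 ->]]] Hv]].
  apply Filter_prod with (fun a => 0 < a < a0) (fun b => b0 < b).
  - exists (mkposreal a0 (proj1 Hab0)). intros a Ha Ha_pos.
    change (Rabs (a - 0) < a0) in Ha. apply Rabs_def2 in Ha. lra.
  - exists b0. auto.
  - intros a b Ha Hb. exists (RInt g a b). split.
    + apply (@RInt_correct R_CompleteNormedModule), ex_RInt_pos; lra.
    + apply HP. change (Rabs (RInt g a b - L) < eps). apply Rabs_def1.
      * enough (RInt g a b <= L) by lra. apply (proj1 HL). exists a, b. split; [lra | reflexivity].
      * enough (RInt g a0 b0 <= RInt g a b) by lra. apply RInt_le_widen; lra.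
Qed.

Lemma is_RInt_gen_lub_point R0 L : 0 < R0 ->
  is_lub (fun v => exists a, 0 < a <= R0 /\ v = RInt g a R0) L ->
  is_RInt_gen g (at_right 0) (at_point R0) L.
Proof.
  intros HR0 HL P [eps HP]. pose proof (cond_pos eps) as Heps.
  destruct (is_lub_approx _ _ eps HL Heps) as [v [[a0 [Ha0 ->]] Hv]].
  apply Filter_prod with (fun a => 0 < a < a0) (fun b => b = R0).
  - exists (mkposreal a0 (proj1 Ha0)). intros a Ha Ha_pos.
    change (Rabs (a - 0) < a0) in Ha. apply Rabs_def2 in Ha. lra.
  - reflexivity.
  - intros a b Ha ->. exists (RInt g a R0). split.
    + apply (@RInt_correct R_CompleteNormedModule), ex_RInt_pos; lra.
    + apply HP. change (Rabs (RInt g a R0 - L) < eps). apply Rabs_def1.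
      * enough (RInt g a R0 <= L) by lra. apply (proj1 HL). exists a. split; [lra | reflexivity].
      * enough (RInt g a0 R0 <= RInt g a R0) by lra. apply RInt_le_widen; lra.
Qed.

Lemma RInt_gen_point_le R0 K : 0 < R0 ->
  (forall a, 0 < a <= R0 -> RInt g a R0 <= K) ->
  RInt_gen g (at_right 0) (at_point R0) <= K.
Proof.
  intros HR0 HK.
  destruct (completeness (fun v => exists a, 0 < a <= R0 /\ v = RInt g a R0)) as [L HL].
  - exists K. intros v [a [Ha ->]]. auto.
  - exists (RInt g R0 R0), R0. split; [lra | reflexivity].
  - rewrite (is_RInt_gen_unique _ _ (is_RInt_gen_lub_point R0 L HR0 HL)).
    apply (proj2 HL). intros v [a [Ha ->]]. auto.
Qed.

End Nonnegative_integrand.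

(** * The Gamma function *)

Definition gamma_integrand (a t : R) : R := Rpower t (a - 1) * exp (- t).

Definition gamma_tail_const (a : R) : R := Rpower (a + 1) (a + 1).

Lemma continuity_pt_exp_opp (f : R -> R) x : continuity_pt f x -> continuity_pt (fun t => exp (- f t)) x.
Proof.
  intros Hf. apply (continuity_pt_comp (fun t => - f t) exp).
  - apply continuity_pt_opp, Hf.
  - apply derivable_continuous_pt, derivable_pt_exp.
Qed.

Lemma continuity_pt_gamma_integrand a t : 0 < t -> continuity_pt (gamma_integrand a) t.
Proof.
  intros Ht. apply continuity_pt_mult.
  - apply continuity_pt_Rpower, Ht.
  - apply continuity_pt_exp_opp, continuity_pt_id.
Qed.

Lemma continuous_gamma_integrand a t : 0 < t -> continuous (gamma_integrand a) t.
Proof. intros Ht. apply continuity_pt_filterlim, continuity_pt_gamma_integrand, Ht. Qed.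

Lemma gamma_integrand_pos a t : 0 < gamma_integrand a t.
Proof. apply Rmult_lt_0_compat; [apply Rpower_pos | apply exp_pos]. Qed.

Lemma ex_RInt_gamma_integrand a u w : 0 < u -> 0 < w -> ex_RInt (gamma_integrand a) u w.
Proof.
  intros Hu Hw. apply (@ex_RInt_continuous R_CompleteNormedModule).
  intros t Ht. apply continuous_gamma_integrand.
  enough (0 < Rmin u w) by lra. apply Rmin_glb_lt; assumption.
Qed.

Lemma RInt_gamma_integrand_le_widen a u u' w w' : 0 < u' -> u' <= u -> u <= w -> w <= w' ->
  RInt (gamma_integrand a) u w <= RInt (gamma_integrand a) u' w'.
Proof.
  apply RInt_le_widen.
  - intros t Ht. apply continuous_gamma_integrand, Ht.
  - intros t _. left. apply gamma_integrand_pos.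
Qed.

Lemma exp_opp_le_1 t : 0 <= t -> exp (- t) <= 1.
Proof.
  intros [Ht | <-]; rewrite <- exp_0; [left; apply exp_increasing; lra | right; f_equal; ring].
Qed.

Lemma gamma_integrand_le_Rpower a t : 0 <= t -> gamma_integrand a t <= Rpower t (a - 1).
Proof.
  intros Ht. unfold gamma_integrand.
  pose proof (Rpower_pos t (a - 1)). pose proof (exp_opp_le_1 t Ht). nra.
Qed.

(* With k = a + 1: gamma_integrand a t = (t e^(-t/k))^k t^(-2), and t e^(-t/k) <= k
   since t/k <= e^(t/k). *)
Lemma gamma_integrand_le_tail a t : 0 < a -> 0 < t ->
  gamma_integrand a t <= gamma_tail_const a * Rpower t (-1 - 1).
Proof.
  intros Ha Ht. set (k := a + 1). assert (Hk : 0 < k) by (unfold k; lra).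
  assert (Hsplit : gamma_integrand a t = Rpower (t * exp (- t / k)) k * Rpower t (-1 - 1)).
  { unfold gamma_integrand.
    rewrite <- Rpower_mult_distr, Rpower_exp by (auto; apply exp_pos).
    replace (k * (- t / k)) with (- t) by (field; lra).
    replace (a - 1) with (k + (-1 - 1)) by (unfold k; ring).
    rewrite Rpower_plus. ring. }
  rewrite Hsplit. apply Rmult_le_compat_r; [left; apply Rpower_pos|].
  apply Rle_Rpower_l; [lra|]. split; [apply Rmult_lt_0_compat; [exact Ht | apply exp_pos]|].
  assert (Hu : t / k * exp (- t / k) <= 1).
  { replace 1 with (exp (t / k) * exp (- t / k))
      by (rewrite <- exp_plus, <- exp_0; f_equal; field; lra).
    apply Rmult_le_compat_r; [left; apply exp_pos|]. pose proof (exp_ineq1_le (t / k)). lra. }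
  replace (t * exp (- t / k)) with (k * (t / k * exp (- t / k))) by (field; lra).
  apply Rle_trans with (k * 1); [apply Rmult_le_compat_l | unfold k]; lra.
Qed.

Lemma RInt_gamma_integrand_head_le a u A : 0 < a -> 0 < u <= A ->
  RInt (gamma_integrand a) u A <= Rpower A a / a.
Proof.
  intros Ha Hu. apply Rle_trans with (RInt (fun t => Rpower t (a - 1)) u A).
  - apply RInt_le; [lra | apply ex_RInt_gamma_integrand; lra | eexists; apply is_RInt_Rpower; lra |].
    intros t Ht. apply gamma_integrand_le_Rpower. lra.
  - rewrite (is_RInt_unique _ _ _ _ (is_RInt_Rpower u A a ltac:(lra) ltac:(lra) ltac:(lra))).
    pose proof (Rpower_pos u a). unfold Rdiv.
    apply Rmult_le_compat_r; [left; apply Rinv_0_lt_compat|]; lra.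
Qed.

Lemma RInt_gamma_integrand_tail_le a B w : 0 < a -> 0 < B <= w ->
  RInt (gamma_integrand a) B w <= gamma_tail_const a / B.
Proof.
  intros Ha HB.
  assert (HI : is_RInt (fun t => gamma_tail_const a * Rpower t (-1 - 1)) B w
                 (gamma_tail_const a * ((Rpower w (-1) - Rpower B (-1)) / (-1)))).
  { apply (@is_RInt_scal R_NormedModule (fun t => Rpower t (-1 - 1))), is_RInt_Rpower; lra. }
  apply Rle_trans with (gamma_tail_const a * ((Rpower w (-1) - Rpower B (-1)) / (-1))).
  - rewrite <- (is_RInt_unique _ _ _ _ HI).
    apply RInt_le; [lra | apply ex_RInt_gamma_integrand; lra | eexists; exact HI |].
    intros t Ht. apply gamma_integrand_le_tail; lra.
  - replace (-1) with (- (1)) by ring. rewrite !Rpower_Ropp, !Rpower_1 by lra.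
    replace (gamma_tail_const a * ((/ w - / B) / - (1)))
      with (gamma_tail_const a / B - gamma_tail_const a / w) by (field; lra).
    enough (0 < gamma_tail_const a / w) by lra.
    apply Rdiv_lt_0_compat; [apply Rpower_pos | lra].
Qed.

Lemma RInt_gamma_integrand_le a A B u w : 0 < a -> 0 < A <= B -> 1 <= B -> 0 < u <= w ->
  RInt (gamma_integrand a) u w <= Rpower A a / a + RInt (gamma_integrand a) A B + gamma_tail_const a / B.
Proof.
  intros Ha HAB HB Huw.
  set (u' := Rmin u A). set (w' := Rmax w B).
  assert (Hu' : 0 < u') by (apply Rmin_glb_lt; lra).
  assert (u' <= u) by apply Rmin_l. assert (u' <= A) by apply Rmin_r.
  assert (w <= w') by apply Rmax_l. assert (B <= w') by apply Rmax_r.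
  apply Rle_trans with (RInt (gamma_integrand a) u' w');
    [apply RInt_gamma_integrand_le_widen; lra|].
  rewrite <- (RInt_Chasles _ u' A w'), <- (RInt_Chasles _ A B w')
    by (apply ex_RInt_gamma_integrand; lra).
  pose proof (RInt_gamma_integrand_head_le a u' A Ha ltac:(lra)).
  pose proof (RInt_gamma_integrand_tail_le a B w' Ha ltac:(lra)).
  simpl. unfold plus; simpl. lra.
Qed.

Lemma is_lub_Gamma a : 0 < a ->
  is_lub (fun v => exists u w, 0 < u <= w /\ v = RInt (gamma_integrand a) u w) (Gamma a).
Proof.
  intros Ha.
  assert (Hcont : forall t, 0 < t -> continuous (gamma_integrand a) t)
    by (intros; apply continuous_gamma_integrand; auto).
  assert (Hnn : forall t, 0 < t -> 0 <= gamma_integrand a t)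
    by (intros; left; apply gamma_integrand_pos).
  destruct (completeness (fun v => exists u w, 0 < u <= w /\ v = RInt (gamma_integrand a) u w))
    as [L HL].
  - exists (Rpower 1 a / a + RInt (gamma_integrand a) 1 1 + gamma_tail_const a / 1).
    intros v [u [w [Huw ->]]]. apply RInt_gamma_integrand_le; lra.
  - exists (RInt (gamma_integrand a) 1 1), 1, 1. split; [lra | reflexivity].
  - replace (Gamma a) with L; [exact HL|]. symmetry.
    apply (is_RInt_gen_unique _ _ (is_RInt_gen_lub_pinfty _ Hcont Hnn L HL)).
Qed.

Lemma RInt_gamma_integrand_le_Gamma a u w : 0 < a -> 0 < u -> u <= w ->
  RInt (gamma_integrand a) u w <= Gamma a.
Proof. intros Ha Hu Huw. apply (is_lub_Gamma a Ha). exists u, w. split; [lra | reflexivity]. Qed.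

Lemma Gamma_le a K : 0 < a -> (forall u w, 0 < u -> u <= w -> RInt (gamma_integrand a) u w <= K) ->
  Gamma a <= K.
Proof. intros Ha HK. apply (is_lub_Gamma a Ha). intros v [u [w [Huw ->]]]. apply HK; lra. Qed.

Lemma Gamma_pos a : 0 < a -> 0 < Gamma a.
Proof.
  intros Ha. apply Rlt_le_trans with (RInt (gamma_integrand a) 1 2);
    [| apply RInt_gamma_integrand_le_Gamma; lra].
  apply RInt_gt_0; [lra | intros; apply gamma_integrand_pos |].
  intros t Ht. apply continuous_gamma_integrand. lra.
Qed.

Lemma is_RInt_gamma_integrand_succ s u w : 0 < u -> u <= w ->
  is_RInt (gamma_integrand (1 + s)) u w
    (Rpower u s * exp (- u) - Rpower w s * exp (- w) + s * RInt (gamma_integrand s) u w).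
Proof.
  intros Hu Huw.
  set (F := fun t => - (Rpower t s * exp (- t))).
  assert (Hparts : is_RInt (fun t => gamma_integrand (1 + s) t - s * gamma_integrand s t) u w
                     (minus (F w) (F u))).
  { apply (@is_RInt_derive R_CompleteNormedModule F); intros t Ht;
      rewrite Rmin_left, Rmax_right in Ht by lra.
    - unfold F. auto_derive.
      + eexists. apply is_derive_Rpower. lra.
      + replace (Derive (fun x : R => Rpower x s) t) with (s * Rpower t (s - 1))
          by (symmetry; apply is_derive_unique, is_derive_Rpower; lra).
        unfold gamma_integrand. replace (1 + s - 1) with s by ring. ring.
    - apply continuity_pt_filterlim, continuity_pt_minus.
      + apply continuity_pt_gamma_integrand. lra.
      + apply continuity_pt_scal, continuity_pt_gamma_integrand. lra. }
  assert (Hscal : is_RInt (fun t => s * gamma_integrand s t) u w (s * RInt (gamma_integrand s) u w)).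
  { apply (@is_RInt_scal R_NormedModule (gamma_integrand s)), (@RInt_correct R_CompleteNormedModule).
    apply ex_RInt_gamma_integrand; lra. }
  replace (Rpower u s * exp (- u) - Rpower w s * exp (- w) + s * RInt (gamma_integrand s) u w)
    with (plus (minus (F w) (F u)) (s * RInt (gamma_integrand s) u w))
    by (unfold F, minus, plus, opp; simpl; ring).
  eapply is_RInt_ext; [| exact (@is_RInt_plus R_NormedModule _ _ _ _ _ _ Hparts Hscal)].
  intros t _. unfold plus; simpl. ring.
Qed.

Lemma Gamma_succ_le s : 0 < s -> Gamma (1 + s) <= s * Gamma s.
Proof.
  intros Hs. apply Rle_plus_epsilon. intros eps Heps.
  apply Gamma_le; [lra|]. intros u w Hu Huw.
  set (u' := Rmin u (Rpower eps (/ s))).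
  assert (Hu' : 0 < u') by (apply Rmin_glb_lt; [lra | apply Rpower_pos]).
  assert (Hu'u : u' <= u) by apply Rmin_l.
  assert (Hsmall : Rpower u' s <= eps).
  { replace eps with (Rpower (Rpower eps (/ s)) s)
      by (rewrite Rpower_mult, Rinv_l, Rpower_1; lra).
    apply Rle_Rpower_l; [lra|]. split; [exact Hu' | apply Rmin_r]. }
  apply Rle_trans with (RInt (gamma_integrand (1 + s)) u' w);
    [apply RInt_gamma_integrand_le_widen; lra|].
  rewrite (is_RInt_unique _ _ _ _ (is_RInt_gamma_integrand_succ s u' w Hu' ltac:(lra))).
  pose proof (RInt_gamma_integrand_le_Gamma s u' w Hs Hu' ltac:(lra)).
  pose proof (exp_opp_le_1 u' ltac:(lra)). pose proof (Rpower_pos u' s).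
  pose proof (Rpower_pos w s). pose proof (exp_pos (- w)).
  nra.
Qed.

(** * The Beta integral *)

Definition gamma_primitive (c x : R) : R := RInt (gamma_integrand c) 1 x.

Lemma is_derive_gamma_primitive c x : 0 < x -> is_derive (gamma_primitive c) x (gamma_integrand c x).
Proof.
  intros Hx. apply (@is_derive_RInt R_NormedModule _ _ 1).
  - exists (mkposreal (x / 2) ltac:(lra)). intros z Hz.
    change (Rabs (z - x) < x / 2) in Hz. apply Rabs_def2 in Hz.
    apply (@RInt_correct R_CompleteNormedModule), ex_RInt_gamma_integrand; lra.
  - apply continuous_gamma_integrand, Hx.
Qed.

Lemma continuity_pt_gamma_primitive c x : 0 < x -> continuity_pt (gamma_primitive c) x.
Proof.
  intros Hx. apply continuity_pt_filterlim, (@ex_derive_continuous R_AbsRing R_NormedModule).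
  eexists. apply is_derive_gamma_primitive, Hx.
Qed.

Lemma RInt_gamma_integrand_primitive c u w : 0 < u -> 0 < w ->
  RInt (gamma_integrand c) u w = gamma_primitive c w - gamma_primitive c u.
Proof.
  intros Hu Hw. unfold gamma_primitive.
  assert (Hsplit := RInt_Chasles (gamma_integrand c) 1 u w
    ltac:(apply ex_RInt_gamma_integrand; lra) ltac:(apply ex_RInt_gamma_integrand; lra)).
  change (RInt (gamma_integrand c) 1 u + RInt (gamma_integrand c) u w = RInt (gamma_integrand c) 1 w)
    in Hsplit.
  lra.
Qed.

Lemma is_RInt_scaled_gamma_integrand p k u w : 0 < k -> 0 < u -> 0 < w ->
  is_RInt (fun v => Rpower v (p - 1) * exp (- (k * v))) u w
    (Rpower k (- p) * RInt (gamma_integrand p) (k * u) (k * w)).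
Proof.
  intros Hk Hu Hw.
  assert (Hlin : is_RInt (gamma_integrand p) (k * u + 0) (k * w + 0) (RInt (gamma_integrand p) (k * u) (k * w))).
  { rewrite !Rplus_0_r. apply (@RInt_correct R_CompleteNormedModule), ex_RInt_gamma_integrand; nra. }
  eapply is_RInt_ext;
    [| exact (@is_RInt_scal R_NormedModule _ _ _ (Rpower k (- p)) _
                (@is_RInt_comp_lin R_NormedModule _ k 0 u w _ Hlin))].
  intros v Hv. assert (0 < Rmin u w) by (apply Rmin_glb_lt; assumption).
  unfold scal; simpl; unfold mult; simpl. unfold gamma_integrand. rewrite Rplus_0_r.
  rewrite <- Rpower_mult_distr by lra.
  transitivity ((Rpower k (- p) * k * Rpower k (p - 1)) * (Rpower v (p - 1) * exp (- (k * v))));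
    [ring |].
  rewrite Rpower_opp_mul_pred by exact Hk. ring.
Qed.

Lemma Gamma_le_window c k alpha beta : 0 < c -> 1 <= k -> 0 < alpha <= 1 -> 1 <= beta ->
  Gamma c * Rpower k (- c) <=
  Rpower k (- c) * RInt (gamma_integrand c) (alpha * k) (beta * k)
  + Rpower alpha c / c + gamma_tail_const c / beta.
Proof.
  intros Hc Hk Ha Hb.
  assert (HG := Gamma_le c _ Hc (fun u w Hu Huw =>
    RInt_gamma_integrand_le c (alpha * k) (beta * k) u w Hc ltac:(nra) ltac:(nra) ltac:(lra))).
  set (m := Rpower k (- c)).
  assert (Hm : 0 < m) by apply Rpower_pos.
  assert (Hm1 : m <= 1).
  { unfold m. rewrite Rpower_Ropp. apply Rinv_le_1, Rpower_ge_1; lra. }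
  assert (Hhead : m * (Rpower (alpha * k) c / c) = Rpower alpha c / c).
  { unfold m. rewrite <- Rpower_mult_distr, Rpower_Ropp by lra.
    pose proof (Rpower_pos k c). field. lra. }
  assert (Htail : m * (gamma_tail_const c / (beta * k)) <= gamma_tail_const c / beta).
  { assert (Hmk : m / k <= 1).
    { apply Rle_trans with (m * 1); [| lra].
      apply Rmult_le_compat_l; [lra | apply Rinv_le_1; lra]. }
    replace (m * (gamma_tail_const c / (beta * k))) with (gamma_tail_const c / beta * (m / k))
      by (field; lra).
    apply Rle_trans with (gamma_tail_const c / beta * 1); [| lra].
    apply Rmult_le_compat_l; [| exact Hmk].
    apply Rlt_le, Rdiv_lt_0_compat; [apply Rpower_pos | lra]. }
  apply (Rmult_le_compat_l m) in HG; [| lra].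
  rewrite Rmult_comm. lra.
Qed.

(* By [is_RInt_scaled_gamma_integrand] with k = 1 + t, this is
   t^(s-1) * int_alpha^b v^(c-1) e^(-v(1+t)) dv. *)
Definition beta_window (s c alpha b t : R) : R :=
  Rpower t (s - 1) * (Rpower (1 + t) (- c) *
    (gamma_primitive c (b * (1 + t)) - gamma_primitive c (alpha * (1 + t)))).

Definition beta_window_db (s c b t : R) : R :=
  gamma_integrand c b * (Rpower t (s - 1) * exp (- (b * t))).

Lemma is_derive_beta_window s c alpha b t : 0 < b -> 0 <= t ->
  is_derive (fun z => beta_window s c alpha z t) b (beta_window_db s c b t).
Proof.
  intros Hb Ht. unfold beta_window. auto_derive.
  - eexists. apply is_derive_gamma_primitive. nra.
  - replace (Derive (fun z => gamma_primitive c z) (b * (1 + t))) with (gamma_integrand c (b * (1 + t)))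
      by (symmetry; apply is_derive_unique, is_derive_gamma_primitive; nra).
    unfold beta_window_db, gamma_integrand.
    rewrite <- Rpower_mult_distr by lra.
    replace (- (b * (1 + t))) with (- b + - (b * t)) by ring. rewrite exp_plus.
    transitivity ((Rpower (1 + t) (- c) * (1 + t) * Rpower (1 + t) (c - 1))
                  * (Rpower b (c - 1) * exp (- b)) * (Rpower t (s - 1) * exp (- (b * t)))); [ring |].
    rewrite Rpower_opp_mul_pred by lra. ring.
Qed.

Lemma continuity_pt_beta_window s c alpha b t : 0 < alpha -> 0 < b -> 0 < t ->
  continuity_pt (beta_window s c alpha b) t.
Proof.
  intros Ha Hb Ht.
  assert (Hplus1 : continuity_pt (fun t => 1 + t) t).
  { apply continuity_pt_plus; [apply continuity_pt_const; intros ? ?; reflexivity | apply continuity_pt_id]. }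
  assert (Hscale : forall k, 0 < k -> continuity_pt (fun t => gamma_primitive c (k * (1 + t))) t).
  { intros k Hk. apply (continuity_pt_comp (fun t => k * (1 + t))).
    - apply continuity_pt_mult; [apply continuity_pt_const; intros ? ?; reflexivity | exact Hplus1].
    - apply continuity_pt_gamma_primitive. nra. }
  apply continuity_pt_mult; [apply continuity_pt_Rpower, Ht|].
  apply continuity_pt_mult; [| apply continuity_pt_minus; apply Hscale; assumption].
  apply (continuity_pt_comp (fun t => 1 + t) (fun z => Rpower z (- c))); [exact Hplus1|].
  apply continuity_pt_Rpower. lra.
Qed.

Lemma continuity_2d_pt_beta_window_db s c b t : 0 < b -> 0 < t ->
  continuity_2d_pt (beta_window_db s c) b t.
Proof.
  intros Hb Ht. unfold beta_window_db.
  apply continuity_2d_pt_mult; [| apply continuity_2d_pt_mult].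
  - apply (continuity_1d_2d_pt_comp (gamma_integrand c) (fun u _ => u));
      [apply continuity_pt_gamma_integrand, Hb | apply continuity_2d_pt_id1].
  - apply (continuity_1d_2d_pt_comp (fun v => Rpower v (s - 1)) (fun _ v => v));
      [apply continuity_pt_Rpower, Ht | apply continuity_2d_pt_id2].
  - apply (continuity_1d_2d_pt_comp (fun z => exp (- z)) (fun u v => u * v)).
    + apply continuity_pt_exp_opp, continuity_pt_id.
    + apply continuity_2d_pt_mult; [apply continuity_2d_pt_id1 | apply continuity_2d_pt_id2].
Qed.

Lemma is_derive_RInt_beta_window s c alpha eps R0 b : 0 < alpha -> 0 < eps <= R0 -> 0 < b ->
  is_derive (fun z => RInt (beta_window s c alpha z) eps R0) b (RInt (beta_window_db s c b) eps R0).
Proof.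
  intros Ha He Hb.
  assert (Hnear : locally b (fun z => 0 < z)).
  { exists (mkposreal (b / 2) ltac:(lra)). intros z Hz.
    change (Rabs (z - b) < b / 2) in Hz. apply Rabs_def2 in Hz. lra. }
  replace (RInt (beta_window_db s c b) eps R0)
    with (RInt (fun t => Derive (fun z => beta_window s c alpha z t) b) eps R0).
  2:{ apply RInt_ext. intros t Ht. rewrite Rmin_left, Rmax_right in Ht by lra.
      apply is_derive_unique, is_derive_beta_window; lra. }
  apply (is_derive_RInt_param (fun z t => beta_window s c alpha z t));
    rewrite ?Rmin_left, ?Rmax_right by lra.
  - apply (filter_imp (fun z => 0 < z)); [| exact Hnear].
    intros z Hz t Ht. eexists. apply is_derive_beta_window; lra.
  - intros t Ht. apply (continuity_2d_pt_ext_loc (beta_window_db s c));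
      [| apply continuity_2d_pt_beta_window_db; lra].
    exists (mkposreal (Rmin (b / 2) (eps / 2)) ltac:(apply Rmin_glb_lt; lra)).
    intros u v Hu Hv. simpl in Hu, Hv.
    pose proof (Rmin_l (b / 2) (eps / 2)). pose proof (Rmin_r (b / 2) (eps / 2)).
    apply Rabs_def2 in Hu. apply Rabs_def2 in Hv.
    symmetry. apply is_derive_unique, is_derive_beta_window; lra.
  - apply (filter_imp (fun z => 0 < z)); [| exact Hnear].
    intros z Hz. apply (@ex_RInt_continuous R_CompleteNormedModule). intros t Ht.
    rewrite Rmin_left, Rmax_right in Ht by lra.
    apply continuity_pt_filterlim, continuity_pt_beta_window; lra.
Qed.

Lemma RInt_beta_window_db_le s c b eps R0 : 0 < s -> 0 < b -> 0 < eps <= R0 ->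
  RInt (beta_window_db s c b) eps R0 <= Gamma s * gamma_integrand (c - s) b.
Proof.
  intros Hs Hb He.
  assert (HI := @is_RInt_scal R_NormedModule _ eps R0 (gamma_integrand c b) _
                  (is_RInt_scaled_gamma_integrand s b eps R0 Hb ltac:(lra) ltac:(lra))).
  rewrite (is_RInt_unique (beta_window_db s c b) eps R0 _ HI). unfold scal; simpl; unfold mult; simpl.
  assert (Hshift : gamma_integrand c b * Rpower b (- s) = gamma_integrand (c - s) b).
  { unfold gamma_integrand. replace (c - s - 1) with (c - 1 + - s) by ring.
    rewrite Rpower_plus. ring. }
  pose proof (RInt_gamma_integrand_le_Gamma s (b * eps) (b * R0) Hs ltac:(nra) ltac:(nra)).
  pose proof (gamma_integrand_pos (c - s) b).
  rewrite <- Hshift in *. rewrite <- Rmult_assoc, (Rmult_comm (Gamma s)).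
  apply Rmult_le_compat_l; lra.
Qed.

(* Fubini in disguise: b |-> int_eps^R0 beta_window(b) - Gamma(s) int_alpha^b gamma_integrand(c-s)
   vanishes at alpha and is nonincreasing by [RInt_beta_window_db_le]. *)
Lemma RInt_beta_window_le s c alpha beta eps R0 : 0 < s < c -> 0 < alpha <= beta -> 0 < eps <= R0 ->
  RInt (beta_window s c alpha beta) eps R0 <= Gamma s * Gamma (c - s).
Proof.
  intros Hs Hab He.
  set (Phi := fun z => RInt (beta_window s c alpha z) eps R0 - Gamma s * gamma_primitive (c - s) z).
  set (dPhi := fun z => RInt (beta_window_db s c z) eps R0 - Gamma s * gamma_integrand (c - s) z).
  assert (HdPhi : forall z, 0 < z -> is_derive Phi z (dPhi z)).
  { intros z Hz. apply (@is_derive_minus R_AbsRing R_NormedModule).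
    - apply is_derive_RInt_beta_window; lra.
    - apply is_derive_scal, is_derive_gamma_primitive, Hz. }
  assert (Hmono : Phi beta <= Phi alpha).
  { destruct (Req_dec alpha beta) as [<- | Hne]; [lra|].
    destruct (MVT_gen Phi alpha beta dPhi) as [xi [Hxi Hmvt]];
      rewrite ?Rmin_left, ?Rmax_right in * by lra.
    - intros z Hz. apply HdPhi. lra.
    - intros z Hz. apply continuity_pt_filterlim, (@ex_derive_continuous R_AbsRing R_NormedModule).
      eexists. apply HdPhi. lra.
    - assert (dPhi xi <= 0) by (unfold dPhi; pose proof (RInt_beta_window_db_le s c xi eps R0); lra).
      assert (dPhi xi * (beta - alpha) <= 0) by (apply Rmult_le_0_r; lra).
      lra. }
  assert (Hzero : RInt (beta_window s c alpha alpha) eps R0 = 0).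
  { transitivity (RInt (fun _ => 0) eps R0).
    - apply RInt_ext. intros t _. unfold beta_window. rewrite Rminus_diag, !Rmult_0_r. reflexivity.
    - rewrite RInt_const. unfold scal; simpl; unfold mult; simpl. ring. }
  assert (Hwindow : gamma_primitive (c - s) beta - gamma_primitive (c - s) alpha <= Gamma (c - s)).
  { rewrite <- RInt_gamma_integrand_primitive by lra.
    apply RInt_gamma_integrand_le_Gamma; lra. }
  pose proof (Gamma_pos s (proj1 Hs)).
  assert (Gamma s * (gamma_primitive (c - s) beta - gamma_primitive (c - s) alpha)
          <= Gamma s * Gamma (c - s)) by (apply Rmult_le_compat_l; lra).
  unfold Phi in Hmono. rewrite Hzero in Hmono. lra.
Qed.

Definition beta_integrand (s c t : R) : R := Rpower t (s - 1) / Rpower (t + 1) c.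

Lemma continuous_beta_integrand s c t : 0 < t -> continuous (beta_integrand s c) t.
Proof.
  intros Ht. apply continuity_pt_filterlim, continuity_pt_div.
  - apply continuity_pt_Rpower, Ht.
  - apply (continuity_pt_comp (fun t => t + 1) (fun z => Rpower z c)).
    + apply continuity_pt_plus; [apply continuity_pt_id | apply continuity_pt_const; intros ? ?; reflexivity].
    + apply continuity_pt_Rpower. lra.
  - apply Rgt_not_eq, Rpower_pos.
Qed.

Lemma beta_integrand_pos s c t : 0 < beta_integrand s c t.
Proof. apply Rdiv_lt_0_compat; apply Rpower_pos. Qed.

Lemma ex_RInt_beta_integrand s c u w : 0 < u -> u <= w -> ex_RInt (beta_integrand s c) u w.
Proof. apply ex_RInt_pos. intros t Ht. apply continuous_beta_integrand, Ht. Qed.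

Lemma beta_integrand_le_Rpower s c t : 0 <= c -> 0 <= t -> beta_integrand s c t <= Rpower t (s - 1).
Proof.
  intros Hc Ht. unfold beta_integrand, Rdiv.
  pose proof (Rpower_pos t (s - 1)). pose proof (Rpower_ge_1 (t + 1) c ltac:(lra) Hc).
  apply Rle_trans with (Rpower t (s - 1) * 1); [| lra].
  apply Rmult_le_compat_l; [lra|]. apply Rinv_le_1. lra.
Qed.

Lemma Gamma_mul_beta_integrand_le s c alpha beta t : 0 < c -> 0 <= t -> 0 < alpha <= 1 -> 1 <= beta ->
  Gamma c * beta_integrand s c t <=
  beta_window s c alpha beta t + (Rpower alpha c / c + gamma_tail_const c / beta) * Rpower t (s - 1).
Proof.
  intros Hc Ht Ha Hb.
  assert (Hk := Gamma_le_window c (1 + t) alpha beta Hc ltac:(lra) Ha Hb).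
  rewrite RInt_gamma_integrand_primitive in Hk by nra.
  assert (Hbeta : beta_integrand s c t = Rpower t (s - 1) * Rpower (1 + t) (- c)).
  { unfold beta_integrand. rewrite Rpower_Ropp, (Rplus_comm t 1). reflexivity. }
  rewrite Hbeta. unfold beta_window.
  pose proof (Rpower_pos t (s - 1)).
  apply (Rmult_le_compat_l (Rpower t (s - 1))) in Hk; [| lra].
  lra.
Qed.

Lemma Gamma_RInt_beta_integrand_le_window s c alpha beta eps R0 :
  0 < s < c -> 0 < eps <= R0 -> 0 < alpha <= 1 -> 1 <= beta ->
  Gamma c * RInt (beta_integrand s c) eps R0 <=
  Gamma s * Gamma (c - s) + (Rpower alpha c / c + gamma_tail_const c / beta) * (Rpower R0 s / s).
Proof.
  intros Hs He Ha Hb.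
  set (d := Rpower alpha c / c + gamma_tail_const c / beta).
  assert (Hd : 0 <= d).
  { unfold d. pose proof (Rpower_pos alpha c). pose proof (Rpower_pos (c + 1) (c + 1)).
    unfold gamma_tail_const. apply Rplus_le_le_0_compat; apply Rlt_le, Rdiv_lt_0_compat; lra. }
  assert (Hlhs : is_RInt (fun t => Gamma c * beta_integrand s c t) eps R0
                   (Gamma c * RInt (beta_integrand s c) eps R0)).
  { apply (@is_RInt_scal R_NormedModule (beta_integrand s c)), (@RInt_correct R_CompleteNormedModule).
    apply ex_RInt_beta_integrand; lra. }
  assert (Hrhs : is_RInt (fun t => beta_window s c alpha beta t + d * Rpower t (s - 1)) eps R0
                   (RInt (beta_window s c alpha beta) eps R0 + d * ((Rpower R0 s - Rpower eps s) / s))).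
  { apply (@is_RInt_plus R_NormedModule).
    - apply (@RInt_correct R_CompleteNormedModule), (@ex_RInt_continuous R_CompleteNormedModule).
      intros t Ht. rewrite Rmin_left, Rmax_right in Ht by lra.
      apply continuity_pt_filterlim, continuity_pt_beta_window; lra.
    - apply (@is_RInt_scal R_NormedModule (fun t => Rpower t (s - 1))), is_RInt_Rpower; lra. }
  assert (Hle : Gamma c * RInt (beta_integrand s c) eps R0 <=
                RInt (beta_window s c alpha beta) eps R0 + d * ((Rpower R0 s - Rpower eps s) / s)).
  { rewrite <- (is_RInt_unique _ _ _ _ Hlhs), <- (is_RInt_unique _ _ _ _ Hrhs).
    apply RInt_le; [lra | eexists; exact Hlhs | eexists; exact Hrhs |].
    intros t Ht. unfold d.
    apply Gamma_mul_beta_integrand_le; lra. }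
  pose proof (RInt_beta_window_le s c alpha beta eps R0 Hs ltac:(lra) He).
  assert (d * ((Rpower R0 s - Rpower eps s) / s) <= d * (Rpower R0 s / s)).
  { apply Rmult_le_compat_l; [exact Hd|]. pose proof (Rpower_pos eps s).
    unfold Rdiv. apply Rmult_le_compat_r; [left; apply Rinv_0_lt_compat|]; lra. }
  lra.
Qed.

Lemma gamma_window_small c delta : 0 < c -> 0 < delta ->
  exists alpha beta, 0 < alpha <= 1 /\ 1 <= beta /\
    Rpower alpha c / c + gamma_tail_const c / beta <= 2 * delta.
Proof.
  intros Hc Hdelta.
  set (alpha := Rmin 1 (Rpower (c * delta) (/ c))).
  set (beta := Rmax 1 (gamma_tail_const c / delta)).
  exists alpha, beta. split; [split; [apply Rmin_glb_lt; [lra | apply Rpower_pos] | apply Rmin_l]|].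
  split; [apply Rmax_l|].
  assert (Hhead : Rpower alpha c / c <= delta).
  { apply Rle_trans with (Rpower (Rpower (c * delta) (/ c)) c / c).
    - unfold Rdiv. apply Rmult_le_compat_r; [left; apply Rinv_0_lt_compat; lra|].
      apply Rle_Rpower_l; [lra|]. split; [apply Rmin_glb_lt; [lra | apply Rpower_pos] | apply Rmin_r].
    - rewrite Rpower_mult, Rinv_l, Rpower_1 by nra. right. field. lra. }
  assert (Htail : gamma_tail_const c / beta <= delta).
  { assert (HM : 0 < gamma_tail_const c) by apply Rpower_pos.
    assert (Hbeta : gamma_tail_const c / delta <= beta) by apply Rmax_r.
    assert (1 <= beta) by apply Rmax_l.
    replace (gamma_tail_const c / beta) with (delta * (gamma_tail_const c / delta) / beta)
      by (field; lra).
    apply Rle_trans with (delta * beta / beta); [| right; field; lra].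
    unfold Rdiv. apply Rmult_le_compat_r; [left; apply Rinv_0_lt_compat; lra|].
    apply Rmult_le_compat_l; lra. }
  lra.
Qed.

Lemma Gamma_RInt_beta_integrand_le s c eps R0 : 0 < s < c -> 0 < eps <= R0 ->
  Gamma c * RInt (beta_integrand s c) eps R0 <= Gamma s * Gamma (c - s).
Proof.
  intros Hs He. apply Rle_plus_epsilon. intros eta Heta.
  set (P := Rpower R0 s / s).
  assert (HP : 0 < P) by (apply Rdiv_lt_0_compat; [apply Rpower_pos | lra]).
  destruct (gamma_window_small c (eta / (2 * P))) as (alpha & beta & Ha & Hb & Hsmall);
    [lra | apply Rdiv_lt_0_compat; lra |].
  eapply Rle_trans; [exact (Gamma_RInt_beta_integrand_le_window s c alpha beta eps R0 Hs He Ha Hb)|].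
  apply Rplus_le_compat_l. fold P.
  apply Rle_trans with (2 * (eta / (2 * P)) * P); [apply Rmult_le_compat_r; lra|].
  right. field. lra.
Qed.

Lemma RInt_gen_beta_integrand_le_Rpower s c R0 : 0 < s -> 0 <= c -> 0 < R0 ->
  RInt_gen (beta_integrand s c) (at_right 0) (at_point R0) <= Rpower R0 s / s.
Proof.
  intros Hs Hc HR0. apply RInt_gen_point_le; [intros t Ht; apply continuous_beta_integrand, Ht
    | intros t _; left; apply beta_integrand_pos | exact HR0 |].
  intros u Hu. apply Rle_trans with (RInt (fun t => Rpower t (s - 1)) u R0).
  - apply RInt_le; [lra | apply ex_RInt_beta_integrand; lra | eexists; apply is_RInt_Rpower; lra |].
    intros t Ht. apply beta_integrand_le_Rpower; lra.
  - rewrite (is_RInt_unique _ _ _ _ (is_RInt_Rpower u R0 s ltac:(lra) ltac:(lra) ltac:(lra))).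
    pose proof (Rpower_pos u s). unfold Rdiv.
    apply Rmult_le_compat_r; [left; apply Rinv_0_lt_compat|]; lra.
Qed.

Lemma Gamma_mul_RInt_gen_beta_integrand_le s c R0 : 0 < s < c -> 0 < R0 ->
  Gamma c * RInt_gen (beta_integrand s c) (at_right 0) (at_point R0) <= Gamma s * Gamma (c - s).
Proof.
  intros Hs HR0. pose proof (Gamma_pos c ltac:(lra)) as Hc.
  set (B := Gamma s * Gamma (c - s) / Gamma c).
  replace (Gamma s * Gamma (c - s)) with (Gamma c * B) by (unfold B; field; lra).
  apply Rmult_le_compat_l; [lra|].
  apply RInt_gen_point_le; [intros t Ht; apply continuous_beta_integrand, Ht
    | intros t _; left; apply beta_integrand_pos | exact HR0 |].
  intros u Hu. apply (Rmult_le_reg_l (Gamma c)); [exact Hc|].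
  replace (Gamma c * B) with (Gamma s * Gamma (c - s)) by (unfold B; field; lra).
  apply Gamma_RInt_beta_integrand_le; lra.
Qed.

(** * Euclidean norm and the Green function *)

Definition sum_sq (x : list R) : R := fold_right (fun a acc => a * a + acc) 0 x.

Fixpoint dot (u v : list R) : R :=
  match u, v with
  | a :: u', b :: v' => a * b + dot u' v'
  | _, _ => 0
  end.

Lemma sum_sq_nonneg x : 0 <= sum_sq x.
Proof. induction x as [| a x IH]; simpl; nra. Qed.

Lemma sum_sq_vsub x y : length x = length y ->
  sum_sq x = sum_sq y + sum_sq (vsub x y) + 2 * dot y (vsub x y).
Proof.
  revert y. induction x as [| a x IH]; intros [| b y] Hlen; try discriminate; simpl.
  - ring.
  - injection Hlen as Hlen. fold (vsub x y). rewrite (IH y Hlen). ring.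
Qed.

Lemma sqr_add_le_mul b w d A B : 0 <= A -> 0 <= B -> d * d <= A * B ->
  (b * w + d) * (b * w + d) <= (b * b + A) * (w * w + B).
Proof.
  intros HA HB Hd.
  enough (2 * b * w * d <= b * b * B + w * w * A) by nra.
  destruct (Req_dec B 0) as [-> | HB0].
  - assert (d = 0) by nra. subst d. nra.
  - apply (Rmult_le_reg_l B); [lra|].
    assert (0 <= w * w * (A * B - d * d)) by (apply Rmult_le_pos; [apply Rle_0_sqr | lra]).
    assert (0 <= (b * B - w * d) * (b * B - w * d)) by apply Rle_0_sqr.
    replace (B * (b * b * B + w * w * A))
      with (B * (2 * b * w * d) + ((b * B - w * d) * (b * B - w * d) + w * w * (A * B - d * d)))
      by ring.
    lra.
Qed.

Lemma dot_sqr_le u v : dot u v * dot u v <= sum_sq u * sum_sq v.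
Proof.
  revert v. induction u as [| a u IH]; intros [| b v]; simpl.
  - lra.
  - pose proof (sum_sq_nonneg (b :: v)). simpl in *. nra.
  - pose proof (sum_sq_nonneg (a :: u)). simpl in *. nra.
  - apply sqr_add_le_mul; [apply sum_sq_nonneg | apply sum_sq_nonneg | apply IH].
Qed.

Lemma vnorm_triangle x y : length x = length y -> vnorm x <= vnorm y + vnorm (vsub x y).
Proof.
  intros Hlen. change (sqrt (sum_sq x) <= sqrt (sum_sq y) + sqrt (sum_sq (vsub x y))).
  rewrite (sum_sq_vsub x y Hlen).
  pose proof (dot_sqr_le y (vsub x y)) as Hcs.
  set (A := sum_sq y) in *. set (B := sum_sq (vsub x y)) in *. set (D := dot y (vsub x y)) in *.
  assert (HA : 0 <= A) by apply sum_sq_nonneg. assert (HB : 0 <= B) by apply sum_sq_nonneg.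
  pose proof (sqrt_pos A). pose proof (sqrt_pos B).
  pose proof (sqrt_sqrt A HA). pose proof (sqrt_sqrt B HB).
  assert (HD : D <= sqrt A * sqrt B).
  { rewrite <- sqrt_mult by assumption.
    apply Rle_trans with (Rabs D); [apply Rle_abs|].
    rewrite <- sqrt_Rsqr_abs. apply sqrt_le_1_alt, Hcs. }
  rewrite <- (sqrt_square (sqrt A + sqrt B)) by lra.
  apply sqrt_le_1_alt. nra.
Qed.

Lemma vnorm_vsub_pos x y : length x = length y -> x <> y -> 0 < vnorm (vsub x y).
Proof.
  intros Hlen Hxy. apply sqrt_lt_R0.
  destruct (sum_sq_nonneg (vsub x y)) as [| Hzero]; [assumption|]. exfalso. apply Hxy.
  clear Hxy. revert y Hlen Hzero. induction x as [| a x IH]; intros [| b y] Hlen Hzero; try discriminate.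
  - reflexivity.
  - injection Hlen as Hlen. simpl in Hzero. fold (vsub x y) in Hzero.
    pose proof (sum_sq_nonneg (vsub x y)).
    assert (a = b) by nra. f_equal; [assumption|]. apply IH; [exact Hlen | nra].
Qed.

Lemma rstar_pos r x y : 0 < r -> 0 <= vnorm x < r -> 0 <= vnorm y < r -> 0 < vnorm (vsub x y) ->
  0 < rstar r x y.
Proof.
  intros Hr Hx Hy Hrho. unfold rstar.
  apply Rdiv_lt_0_compat; [apply Rmult_lt_0_compat | apply Rmult_lt_0_compat]; nra.
Qed.

Lemma rstar_le r x y : 0 < r -> 0 <= vnorm x < r -> 0 <= vnorm y < r -> 0 < vnorm (vsub x y) ->
  rstar r x y <= 4 * (r - vnorm x) * (r - vnorm y) / (vnorm (vsub x y) * vnorm (vsub x y)).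
Proof.
  intros Hr Hx Hy Hrho. unfold rstar.
  set (X := vnorm x) in *. set (Y := vnorm y) in *. set (rho := vnorm (vsub x y)) in *.
  replace (4 * (r - X) * (r - Y) / (rho * rho))
    with ((2 * r * (r - X)) * (2 * r * (r - Y)) / (r ^ 2 * rho ^ 2)) by (field; lra).
  unfold Rdiv. apply Rmult_le_compat_r; [left; apply Rinv_0_lt_compat, Rmult_lt_0_compat; nra|].
  apply Rmult_le_compat; nra.
Qed.

Lemma Rpower_rstar_le r x y s : 0 < r -> 0 <= vnorm x < r -> 0 <= vnorm y < r -> 0 < vnorm (vsub x y) ->
  0 <= s ->
  Rpower (rstar r x y) s <=
  Rpower 2 (2 * s) * Rpower (r - vnorm x) s * Rpower (r - vnorm y) s / Rpower (vnorm (vsub x y)) (2 * s).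
Proof.
  intros Hr Hx Hy Hrho Hs.
  eapply Rle_trans; [apply Rle_Rpower_l; [exact Hs | split; [apply rstar_pos | apply rstar_le]]; assumption|].
  assert (Hdx : 0 < r - vnorm x) by lra. assert (Hdy : 0 < r - vnorm y) by lra.
  set (dx := r - vnorm x) in *. set (dy := r - vnorm y) in *. set (rho := vnorm (vsub x y)) in *.
  assert (Hrho2 : 0 < rho * rho) by (apply Rmult_lt_0_compat; exact Hrho).
  unfold Rdiv.
  rewrite <- (Rpower_mult_distr (4 * dx * dy)), <- (Rpower_mult_distr (4 * dx)),
    <- (Rpower_mult_distr 4), Rpower_Rinv, <- (Rpower_mult_distr rho)
    by (first [lra | nra | apply Rinv_0_lt_compat; exact Hrho2]).
  replace 4 with (2 * 2) by ring. rewrite <- (Rpower_mult_distr 2) by lra.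
  rewrite <- !Rpower_plus. replace (s + s) with (2 * s) by ring. reflexivity.
Qed.

Lemma Rpower_near_le dy rho s s1 : 0 < dy <= 2 * rho -> 0 < s1 <= 2 * s ->
  Rpower dy s1 <= Rpower 2 (2 * s) * Rpower rho s1.
Proof.
  intros Hdy Hs1.
  apply Rle_trans with (Rpower (2 * rho) s1); [apply Rle_Rpower_l; lra|].
  rewrite <- Rpower_mult_distr by lra. apply Rmult_le_compat_r; [left; apply Rpower_pos|].
  apply Rle_Rpower; lra.
Qed.

Lemma Rpower_far_le dx dy rho s s1 : 0 < rho -> 2 * rho < dy -> dy <= dx + rho -> 0 < s -> s1 < 2 * s ->
  Rpower rho (2 * s) <= Rpower 2 (2 * s) * Rpower dx s * Rpower dy (s - s1) * Rpower rho s1.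
Proof.
  intros Hrho Hfar Hdx Hs Hs1.
  assert (Hrho_dy : Rpower rho (2 * s - s1) <= Rpower dy (2 * s - s1)) by (apply Rle_Rpower_l; lra).
  assert (Hdy_dx : Rpower dy s <= Rpower 2 (2 * s) * Rpower dx s).
  { apply Rle_trans with (Rpower (2 * dx) s); [apply Rle_Rpower_l; lra|].
    rewrite <- Rpower_mult_distr by lra. apply Rmult_le_compat_r; [left; apply Rpower_pos|].
    apply Rle_Rpower; lra. }
  replace (Rpower rho (2 * s)) with (Rpower rho (2 * s - s1) * Rpower rho s1)
    by (rewrite <- Rpower_plus; f_equal; ring).
  replace (Rpower dy (2 * s - s1)) with (Rpower dy s * Rpower dy (s - s1)) in Hrho_dy
    by (rewrite <- Rpower_plus; f_equal; ring).
  pose proof (Rpower_pos rho s1). pose proof (Rpower_pos dy (s - s1)).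
  apply Rmult_le_compat_r; [lra|].
  apply Rle_trans with (Rpower dy s * Rpower dy (s - s1)); [exact Hrho_dy|].
  apply Rmult_le_compat_r; lra.
Qed.

Section Green_ball_estimate.

Variables (n : nat) (s r s1 : R) (x y : list R).
Hypotheses (n_ge_2 : (2 <= n)%nat) (s_range : 0 < s < 1) (r_pos : 0 < r) (s1_range : 0 < s1 < 2 * s)
  (same_length : length x = length y) (x_in_ball : vnorm x < r) (y_in_ball : vnorm y < r)
  (x_neq_y : x <> y).

Local Notation c := (INR n / 2).
Local Notation dx := (r - vnorm x).
Local Notation dy := (r - vnorm y).
Local Notation rho := (vnorm (vsub x y)).
Local Notation V := (RInt_gen (beta_integrand s c) (at_right 0) (at_point (rstar r x y))).

Ltac positivity :=
  repeat (apply Rmult_lt_0_compat || apply Rdiv_lt_0_compat || apply Rinv_0_lt_compat);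
  try apply Rpower_pos; try apply Gamma_pos; try lra.

Lemma s_lt_c : s < c.
Proof.
  enough (2 <= INR n) by lra. replace 2 with (INR 2) by reflexivity. apply le_INR, n_ge_2.
Qed.

Lemma rho_pos : 0 < rho.
Proof. apply vnorm_vsub_pos; assumption. Qed.

Lemma rstar_ball_pos : 0 < rstar r x y.
Proof. apply rstar_pos; [exact r_pos | split; [apply sqrt_pos | assumption] .. | apply rho_pos]. Qed.

Lemma green_ball_eq : green_ball n s r x y =
  Gamma c / (Rpower 2 (2 * s) * Rpower PI c * Gamma s ^ 2) * (Rpower rho (2 * s) / Rpower rho (INR n)) * V.
Proof. unfold green_ball, kappa. rewrite Rpower_minus. reflexivity. Qed.

Lemma green_ball_le_near : dy <= 2 * rho ->
  green_ball n s r x y <=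
  / Rpower PI c / Gamma s * (Rpower 2 (2 * s) * Gamma c / Gamma (1 + s)) * Rpower dx s *
  (Rpower dy (s - s1) / Rpower rho (INR n - s1)).
Proof.
  intros Hnear. pose proof rho_pos as Hrho. pose proof s_lt_c as Hsc.
  assert (Hx0 : 0 <= vnorm x) by apply sqrt_pos. assert (Hy0 : 0 <= vnorm y) by apply sqrt_pos.
  assert (HV : V <= Rpower (rstar r x y) s / s)
    by (apply RInt_gen_beta_integrand_le_Rpower, rstar_ball_pos; lra).
  assert (HR := Rpower_rstar_le r x y s r_pos ltac:(lra) ltac:(lra) Hrho ltac:(lra)).
  assert (Hdy := Rpower_near_le dy rho s s1 ltac:(lra) ltac:(lra)).
  assert (HgS := Gamma_succ_le s ltac:(lra)).
  rewrite green_ball_eq, (Rpower_minus dy s s1), (Rpower_minus rho (INR n) s1).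
  set (Q := Rpower 2 (2 * s)) in *. set (Pi := Rpower PI c).
  set (gc := Gamma c). set (g1 := Gamma s) in *. set (gS := Gamma (1 + s)) in *.
  set (xs := Rpower dx s) in *. set (ys := Rpower dy s) in *. set (y1 := Rpower dy s1) in *.
  set (r2s := Rpower rho (2 * s)) in *. set (rn := Rpower rho (INR n)). set (r1 := Rpower rho s1) in *.
  assert (0 < Q /\ 0 < Pi /\ 0 < xs /\ 0 < ys /\ 0 < y1 /\ 0 < r2s /\ 0 < rn /\ 0 < r1)
    as (HQ & HPi & Hxs & Hys & Hy1 & Hr2s & Hrn & Hr1) by (repeat split; apply Rpower_pos).
  assert (0 < gc /\ 0 < g1 /\ 0 < gS) as (Hgc & Hg1 & HgS0)
    by (repeat split; apply Gamma_pos; lra).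
  set (K := gc * xs * ys / (Pi * g1 * rn)).
  assert (HK : 0 < K) by (unfold K; positivity).
  apply Rle_trans with (K * / (s * g1)).
  - apply Rle_trans with (gc / (Q * Pi * g1 ^ 2) * (r2s / rn) * (Q * xs * ys / r2s / s)).
    + apply Rmult_le_compat_l; [apply Rlt_le; positivity; apply pow_lt, Hg1|].
      apply Rle_trans with (Rpower (rstar r x y) s / s); [exact HV|].
      unfold Rdiv. apply Rmult_le_compat_r; [left; apply Rinv_0_lt_compat; lra | exact HR].
    + right. unfold K. field. repeat split; lra.
  - replace (/ Pi / g1 * (Q * gc / gS) * xs * (ys / y1 / (rn / r1))) with (K * (Q * r1 / (gS * y1)))
      by (unfold K; field; repeat split; lra).
    apply Rmult_le_compat_l; [lra|].
    apply Rinv_le_div; [positivity | positivity | apply Rmult_le_compat; lra].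
Qed.

Lemma green_ball_le_far : 2 * rho < dy ->
  green_ball n s r x y <=
  / Rpower PI c / Gamma s * Gamma (c - s) * Rpower dx s *
  (Rpower dy (s - s1) / Rpower rho (INR n - s1)).
Proof.
  intros Hfar. pose proof rho_pos as Hrho. pose proof s_lt_c as Hsc.
  assert (HV : Gamma c * V <= Gamma s * Gamma (c - s))
    by (apply Gamma_mul_RInt_gen_beta_integrand_le; [lra | apply rstar_ball_pos]).
  assert (Htri := vnorm_triangle x y same_length).
  assert (Hkey := Rpower_far_le dx dy rho s s1 Hrho Hfar ltac:(lra) ltac:(lra) ltac:(lra)).
  rewrite green_ball_eq, (Rpower_minus rho (INR n) s1).
  set (Q := Rpower 2 (2 * s)) in *. set (Pi := Rpower PI c).
  set (gc := Gamma c) in *. set (g1 := Gamma s) in *. set (gB := Gamma (c - s)) in *.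
  set (xs := Rpower dx s) in *. set (ysm := Rpower dy (s - s1)) in *.
  set (r2s := Rpower rho (2 * s)) in *. set (rn := Rpower rho (INR n)). set (r1 := Rpower rho s1) in *.
  assert (0 < Q /\ 0 < Pi /\ 0 < xs /\ 0 < ysm /\ 0 < r2s /\ 0 < rn /\ 0 < r1)
    as (HQ & HPi & Hxs & Hysm & Hr2s & Hrn & Hr1) by (repeat split; apply Rpower_pos).
  assert (0 < gc /\ 0 < g1 /\ 0 < gB) as (Hgc & Hg1 & HgB)
    by (repeat split; apply Gamma_pos; lra).
  set (K := gB / (Pi * g1 * rn)).
  assert (HK : 0 < K) by (unfold K; positivity).
  apply Rle_trans with (K * (r2s / Q)).
  - replace (gc / (Q * Pi * g1 ^ 2) * (r2s / rn) * V) with (gc * V * (r2s / (Q * Pi * g1 ^ 2 * rn)))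
      by (field; repeat split; lra).
    replace (K * (r2s / Q)) with (g1 * gB * (r2s / (Q * Pi * g1 ^ 2 * rn)))
      by (unfold K; field; repeat split; lra).
    apply Rmult_le_compat_r; [apply Rlt_le; positivity; apply pow_lt, Hg1 | exact HV].
  - replace (/ Pi / g1 * gB * xs * (ysm / (rn / r1))) with (K * (xs * ysm * r1))
      by (unfold K; field; repeat split; lra).
    apply Rmult_le_compat_l; [lra|].
    apply (Rmult_le_reg_l Q); [exact HQ|].
    replace (Q * (r2s / Q)) with r2s by (field; lra). lra.
Qed.

End Green_ball_estimate.

Theorem lemma4p3 (n : nat) (s r s1 : R) (x y : list R) :
  (2 <= n)%nat -> 0 < s < 1 -> 0 < r -> 0 < s1 < 2 * s ->
  length x = n -> length y = n -> vnorm x < r -> vnorm y < r -> x <> y ->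
  green_ball n s r x y <=
  C4 n s * Rpower (r - vnorm x) s *
  (Rpower (r - vnorm y) (s - s1) / Rpower (vnorm (vsub x y)) (INR n - s1)).
Proof.
  intros Hn Hs Hr Hs1 Hlx Hly Hx Hy Hxy.
  assert (Hlen : length x = length y) by congruence.
  set (scale := / Rpower PI (INR n / 2) / Gamma s).
  set (Px := Rpower (r - vnorm x) s).
  set (Py := Rpower (r - vnorm y) (s - s1) / Rpower (vnorm (vsub x y)) (INR n - s1)).
  assert (Hmax : forall m,
    m <= Rmax (Rpower 2 (2 * s) * Gamma (INR n / 2) / Gamma (1 + s)) (Gamma (INR n / 2 - s)) ->
    scale * m * Px * Py <= C4 n s * Px * Py).
  { intros m Hm. unfold C4. fold scale.
    apply Rmult_le_compat_r; [apply Rlt_le, Rdiv_lt_0_compat; apply Rpower_pos|].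
    apply Rmult_le_compat_r; [apply Rlt_le, Rpower_pos|].
    apply Rmult_le_compat_l; [| exact Hm].
    apply Rlt_le, Rdiv_lt_0_compat; [apply Rinv_0_lt_compat, Rpower_pos | apply Gamma_pos; lra]. }
  destruct (Rle_lt_dec (r - vnorm y) (2 * vnorm (vsub x y))) as [Hnear | Hfar];
    eapply Rle_trans.
  - exact (green_ball_le_near n s r s1 x y Hn Hs Hr Hs1 Hlen Hx Hy Hxy Hnear).
  - apply Hmax, Rmax_l.
  - exact (green_ball_le_far n s r s1 x y Hn Hs Hr Hs1 Hlen Hx Hy Hxy Hfar).
  - apply Hmax, Rmax_r.
Qed.
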